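(* Let $(X,\widetilde{\tau},\mathfrak{a}_E,E)$ be a soft aura topological space. For every $(G,E)\in\mathrm{SS}(X,E)$, the transfinite sequence $(\mathrm{cl}_{\mathfrak{a}}^{\alpha}(G,E))_{\alpha}$ stabilizes at some ordinal $\gamma\le|X|$. The operator $\mathrm{cl}_{\mathfrak{a}}^{\infty}(G,E):=\mathrm{cl}_{\mathfrak{a}}^{\gamma}(G,E)$ is a soft Kuratowski closure operator, i.e. it satisfies $\mathrm{cl}_{\mathfrak{a}}^{\infty}(\widetilde{\Phi})=\widetilde{\Phi}$, $(G,E)\sqsubseteq\mathrm{cl}_{\mathfrak{a}}^{\infty}(G,E)$, $\mathrm{cl}_{\mathfrak{a}}^{\infty}((G,E)\sqcup(H,E))=\mathrm{cl}_{\mathfrak{a}}^{\infty}(G,E)\sqcup\mathrm{cl}_{\mathfrak{a}}^{\infty}(H,E)$, and $\mathrm{cl}_{\mathfrak{a}}^{\infty}(\mathrm{cl}_{\mathfrak{a}}^{\infty}(G,E))=\mathrm{cl}_{\mathfrak{a}}^{\infty}(G,E)$ for all $(G,E),(H,E)\in\mathrm{SS}(X,E)$.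
   Context: Let $X$ be a nonempty set and $E$ a nonempty parameter set. A soft set over $X$ is a map $F:E\to\mathcal{P}(X)$, written $(F,E)$; $\mathrm{SS}(X,E)$ denotes all soft sets. Operations ($\sqsubseteq$, soft union $\sqcup$ including arbitrary unions, etc.) are parameterwise; $\widetilde{\Phi}$ is the soft set with all values $\emptyset$. A soft topology $\widetilde{\tau}$ is a subfamily of $\mathrm{SS}(X,E)$ containing $\widetilde{\Phi}$ and the soft set with all values $X$, closed under arbitrary soft unions and finite soft intersections. A soft scope function is a map $\mathfrak{a}_E:X\to\widetilde{\tau}$ with $x\in\mathfrak{a}_E(x)(e)$ for all $x\in X$, $e\in E$; $(X,\widetilde{\tau},\mathfrak{a}_E,E)$ is a soft aura topological space. Soft aura-closure: $\mathrm{cl}_{\mathfrak{a}}(G,E)(e)=\{x\in X:\mathfrak{a}_E(x)(e)\cap G(e)\neq\emptyset\}$. Transfinite iterates: $\mathrm{cl}_{\mathfrak{a}}^0(G,E)=(G,E)$; $\mathrm{cl}_{\mathfrak{a}}^{\alpha+1}(G,E)=\mathrm{cl}_{\mathfrak{a}}(\mathrm{cl}_{\mathfrak{a}}^{\alpha}(G,E))$; $\mathrm{cl}_{\mathfrak{a}}^{\lambda}(G,E)=\bigsqcup_{\alpha<\lambda}\mathrm{cl}_{\mathfrak{a}}^{\alpha}(G,E)$ for limit ordinals $\lambda$. *)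

From Stdlib Require Import Classical ClassicalEpsilon FunctionalExtensionality.

Set Implicit Arguments.

Definition softset (X E : Type) := E -> X -> Prop.

Section Soft.
Variables X E : Type.

Definition soft_empty : softset X E := fun _ _ => False.
Definition soft_full : softset X E := fun _ _ => True.
Definition soft_sub (G H : softset X E) : Prop := forall e x, G e x -> H e x.
Definition soft_union (G H : softset X E) : softset X E :=
  fun e x => G e x \/ H e x.
Definition soft_inter (G H : softset X E) : softset X E :=
  fun e x => G e x /\ H e x.
Definition soft_bigunion (F : softset X E -> Prop) : softset X E :=
  fun e x => exists S, F S /\ S e x.

Definition soft_topology (tau : softset X E -> Prop) : Prop :=
  tau soft_empty /\ tau soft_full /\
  (forall F : softset X E -> Prop, (forall S, F S -> tau S) -> tau (soft_bigunion F)) /\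
  (forall S T, tau S -> tau T -> tau (soft_inter S T)).

Definition soft_scope (tau : softset X E -> Prop) (a : X -> softset X E) : Prop :=
  forall x, tau (a x) /\ forall e, a x e x.

Definition aura_cl (a : X -> softset X E) (G : softset X E) : softset X E :=
  fun e x => exists y, a x e y /\ G e y.
End Soft.

(* Ordinals are represented by (elements of) well-ordered types. *)
Record wellorder := WellOrder {
  wo_car :> Type;
  wo_lt : wo_car -> wo_car -> Prop;
  wo_wf : well_founded wo_lt;
  wo_trans : forall x y z, wo_lt x y -> wo_lt y z -> wo_lt x z;
  wo_total : forall x y, wo_lt x y \/ x = y \/ wo_lt y x
}.

Definition ipred {W : wellorder} (alpha beta : W) : Prop :=
  wo_lt W beta alpha /\ forall d, wo_lt W d alpha -> d = beta \/ wo_lt W d beta.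

Section Transfinite.
Variables X E : Type.
Variable a : X -> softset X E.
Variable G : softset X E.
Variable W : wellorder.

(* cl^0 = G ; cl^(b+1) = cl_a(cl^b) ; cl^lambda = union_{b<lambda} cl^b *)
Definition tf_step (alpha : W)
    (rec : forall beta : W, wo_lt W beta alpha -> softset X E) : softset X E :=
  match excluded_middle_informative (exists beta, ipred alpha beta) with
  | left h =>
      let (beta, hb) := constructive_indefinite_description _ h in
      aura_cl a (rec beta (proj1 hb))
  | right _ =>
      match excluded_middle_informative (exists beta, wo_lt W beta alpha) with
      | left _ => fun e x => exists beta (h : wo_lt W beta alpha), rec beta h e x
      | right _ => G
      end
  end.

Definition tf_iter : W -> softset X E :=
  Fix (wo_wf W) (fun _ => softset X E) tf_step.
End Transfinite.

Definition card_lt (A B : Type) : Prop :=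
  (exists f : A -> B, forall u v, f u = f v -> u = v) /\
  ~ (exists g : B -> A, forall u v, g u = g v -> u = v).

(* the ordinal gamma (as an element of W) is <= |X| (the initial ordinal of
   cardinality |X|): every beta < gamma has |beta| < |X|. *)
Definition ord_le_card (W : wellorder) (gamma : W) (X : Type) : Prop :=
  forall beta, wo_lt W beta gamma -> card_lt {d : W | wo_lt W d beta} X.

Definition stabilizes_at (X E : Type) (a : X -> softset X E) (G : softset X E)
    (W : wellorder) (gamma : W) : Prop :=
  ord_le_card W gamma X /\
  aura_cl a (tf_iter a G W gamma) = tf_iter a G W gamma /\
  (forall alpha, wo_lt W gamma alpha -> tf_iter a G W alpha = tf_iter a G W gamma).

(* cl^infty(G) := cl^gamma(G) for a stabilization ordinal gamma <= |X|
   (chosen; default G if none exists, which the theorem rules out). *)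
Definition clinf (X E : Type) (a : X -> softset X E) (G : softset X E) : softset X E :=
  match excluded_middle_informative
          (exists (W : wellorder) (gamma : W), stabilizes_at a G W gamma) with
  | left h =>
      let (W, hW) := constructive_indefinite_description _ h in
      let (gamma, _) := constructive_indefinite_description _ hW in
      tf_iter a G W gamma
  | right _ => G
  end.

(* The aura closure is extensive (x lies in each of its scopes), monotone and
   commutes with unions.  By transfinite induction every iterate cl^alpha(G) lies
   between G and any aura-closed soft set containing G, so once an iterate is
   aura-closed it is the least aura-closed soft set containing G and the sequence
   is constant from there on; cl^infty is this hull, and the Kuratowski axioms are
   those of the hull operator of a family of closed sets containing the empty soft
   set and closed under binary unions.  Stabilization happens along omega + 1: a
   point of cl_a(U_n cl^n(G)) has a single witness, which lies in some cl^n(G).  If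
   stage m is not closed, a new point appears at some parameter e between stages m
   and m + 1; then new points appear at e at every earlier step too, so X has at
   least m + 1 points. *)
From Stdlib Require Import Classical ClassicalEpsilon FunctionalExtensionality
  PropExtensionality Arith Lia List.

Lemma soft_sub_antisym {X E} (F F' : softset X E) :
  soft_sub F F' -> soft_sub F' F -> F = F'.
Proof.
  intros h h'. apply functional_extensionality; intro e.
  apply functional_extensionality; intro x.
  apply propositional_extensionality; split; [apply h | apply h'].
Qed.

Section AuraHull.
Context {X E : Type}.
Variable a : X -> softset X E.

Definition aura_closed (F : softset X E) : Prop := soft_sub (aura_cl a F) F.

Definition aura_hull (G : softset X E) : softset X E :=
  fun e x => forall F, aura_closed F -> soft_sub G F -> F e x.

Lemma aura_cl_mono F F' : soft_sub F F' -> soft_sub (aura_cl a F) (aura_cl a F').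
Proof. intros h e x [y [hy hF]]. exists y; split; [exact hy | exact (h e y hF)]. Qed.

Lemma aura_closed_empty : aura_closed (@soft_empty X E).
Proof. intros e x [y [_ []]]. Qed.

Lemma aura_closed_union F F' :
  aura_closed F -> aura_closed F' -> aura_closed (soft_union F F').
Proof.
  intros hF hF' e x [y [hy [h | h]]]; [left; apply hF | right; apply hF'];
    exists y; auto.
Qed.

Lemma sub_aura_hull G : soft_sub G (aura_hull G).
Proof. intros e x hx F _ hG. exact (hG e x hx). Qed.

Lemma aura_hull_min G F : aura_closed F -> soft_sub G F -> soft_sub (aura_hull G) F.
Proof. intros hF hG e x hx. exact (hx F hF hG). Qed.

Lemma aura_hull_closed G : aura_closed (aura_hull G).
Proof.
  intros e x hx F hF hG. apply hF.
  exact (aura_cl_mono _ _ (aura_hull_min _ _ hF hG) e x hx).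
Qed.

Lemma aura_hull_mono G H : soft_sub G H -> soft_sub (aura_hull G) (aura_hull H).
Proof.
  intro h. apply aura_hull_min; [apply aura_hull_closed |].
  intros e x hx. apply sub_aura_hull, h, hx.
Qed.

Lemma aura_hull_id F : aura_closed F -> aura_hull F = F.
Proof.
  intro hF. apply soft_sub_antisym; [| apply sub_aura_hull].
  apply aura_hull_min; [exact hF | intros e x hx; exact hx].
Qed.

Lemma aura_hull_union G H :
  aura_hull (soft_union G H) = soft_union (aura_hull G) (aura_hull H).
Proof.
  apply soft_sub_antisym.
  - apply aura_hull_min; [apply aura_closed_union; apply aura_hull_closed |].
    intros e x [h | h]; [left | right]; apply sub_aura_hull, h.
  - intros e x [h | h]; revert e x h; apply aura_hull_mono;
      intros e x hx; [left | right]; exact hx.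
Qed.

Hypothesis aura_refl : forall x e, a x e x.

Lemma sub_aura_cl F : soft_sub F (aura_cl a F).
Proof. intros e x hx. exists x. split; [apply aura_refl | exact hx]. Qed.

Lemma aura_closed_eq F : aura_closed F -> aura_cl a F = F.
Proof. intro hF. apply soft_sub_antisym; [exact hF | apply sub_aura_cl]. Qed.

End AuraHull.

Section WellOrder.
Context {W : wellorder}.

Lemma wo_irrefl (x : W) : ~ wo_lt W x x.
Proof.
  induction x as [x IH] using (well_founded_ind (wo_wf W)).
  intro h. exact (IH x h h).
Qed.

Lemma ipred_unique {alpha beta beta' : W} :
  ipred alpha beta -> ipred alpha beta' -> beta = beta'.
Proof.
  intros [hb hb'] [hc hc'].
  destruct (hb' beta' hc) as [-> | h]; [reflexivity |].
  destruct (hc' beta hb) as [-> | h']; [reflexivity |].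
  exfalso. exact (wo_irrefl _ (wo_trans W _ _ _ h h')).
Qed.

Lemma wo_least (P : W -> Prop) :
  (exists x, P x) -> exists x, P x /\ forall y, wo_lt W y x -> ~ P y.
Proof.
  intros [x hx]. revert hx.
  induction x as [x IH] using (well_founded_ind (wo_wf W)). intro hx.
  destruct (classic (exists y, wo_lt W y x /\ P y)) as [[y [hy hPy]] | hno].
  - exact (IH y hy hPy).
  - exists x. split; [exact hx |]. intros y hy hPy. apply hno. eauto.
Qed.

End WellOrder.

Section Transfinite.
Context {X E : Type}.
Variable a : X -> softset X E.
Variable G : softset X E.
Context {W : wellorder}.

Notation cl := (tf_iter a G W).

Lemma tf_iter_unfold alpha : cl alpha = tf_step a G W alpha (fun beta _ => cl beta).
Proof.
  unfold tf_iter at 1. rewrite Fix_eq; [reflexivity |].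
  intros x f g hfg.
  replace g with f; [reflexivity |].
  apply functional_extensionality_dep; intro y.
  apply functional_extensionality_dep; intro p. apply hfg.
Qed.

Variant tf_iter_spec (alpha : W) : softset X E -> Prop :=
  | TfZero : (forall beta, ~ wo_lt W beta alpha) -> tf_iter_spec alpha G
  | TfSucc beta : ipred alpha beta -> tf_iter_spec alpha (aura_cl a (cl beta))
  | TfLimit : (forall beta, ~ ipred alpha beta) -> (exists beta, wo_lt W beta alpha) ->
      tf_iter_spec alpha (fun e x => exists beta (_ : wo_lt W beta alpha), cl beta e x).

Lemma tf_iterP alpha : tf_iter_spec alpha (cl alpha).
Proof.
  rewrite tf_iter_unfold. unfold tf_step.
  destruct (excluded_middle_informative _) as [hs | hs].
  - destruct (constructive_indefinite_description _ hs) as [beta hb].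
    apply TfSucc; exact hb.
  - destruct (excluded_middle_informative _) as [hl | hl].
    + apply TfLimit; [intros beta hb; apply hs; exists beta |]; assumption.
    + apply TfZero. intros beta hb. apply hl. exists beta; exact hb.
Qed.

Lemma tf_iter_succ {alpha beta : W} : ipred alpha beta -> cl alpha = aura_cl a (cl beta).
Proof.
  intro hb. destruct (tf_iterP alpha) as [hz | beta' hb' | hl _].
  - exfalso. exact (hz beta (proj1 hb)).
  - rewrite (ipred_unique hb' hb). reflexivity.
  - exfalso. exact (hl beta hb).
Qed.

Lemma tf_iter_sub_closed {F : softset X E} :
  aura_closed a F -> soft_sub G F -> forall alpha, soft_sub (cl alpha) F.
Proof.
  intros hF hG alpha.
  induction alpha as [alpha IH] using (well_founded_ind (wo_wf W)).
  destruct (tf_iterP alpha) as [_ | beta hb | _ _].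
  - exact hG.
  - intros e x hx. apply hF. exact (aura_cl_mono _ _ _ (IH beta (proj1 hb)) e x hx).
  - intros e x [beta [hb hx]]. exact (IH beta hb e x hx).
Qed.

Hypothesis aura_refl : forall x e, a x e x.

Lemma sub_tf_iter alpha : soft_sub G (cl alpha).
Proof.
  induction alpha as [alpha IH] using (well_founded_ind (wo_wf W)).
  destruct (tf_iterP alpha) as [_ | beta hb | _ [beta hb]].
  - intros e x hx; exact hx.
  - intros e x hx. apply sub_aura_cl; [exact aura_refl | exact (IH beta (proj1 hb) e x hx)].
  - intros e x hx. exists beta, hb. exact (IH beta hb e x hx).
Qed.

Lemma tf_iter_mono {beta alpha : W} : wo_lt W beta alpha -> soft_sub (cl beta) (cl alpha).
Proof.
  revert beta.
  induction alpha as [alpha IH] using (well_founded_ind (wo_wf W)).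
  intros beta hlt. destruct (tf_iterP alpha) as [hz | gamma [hg hg'] | _ _].
  - exfalso. exact (hz beta hlt).
  - intros e x hx. apply sub_aura_cl; [exact aura_refl |].
    destruct (hg' beta hlt) as [-> | h]; [exact hx | exact (IH gamma hg beta h e x hx)].
  - intros e x hx. exists beta, hlt. exact hx.
Qed.

Lemma tf_iter_stable {gamma alpha : W} :
  aura_closed a (cl gamma) -> wo_lt W gamma alpha -> cl alpha = cl gamma.
Proof.
  intros hclosed hlt. apply soft_sub_antisym.
  - exact (tf_iter_sub_closed hclosed (sub_tf_iter gamma) alpha).
  - exact (tf_iter_mono hlt).
Qed.

Lemma stabilizes_at_aura_hull {gamma : W} :
  stabilizes_at a G W gamma -> cl gamma = aura_hull a G.
Proof.
  intros [_ [hfix _]].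
  assert (hclosed : aura_closed a (cl gamma)).
  { unfold aura_closed. rewrite hfix. intros e x h; exact h. }
  apply soft_sub_antisym.
  - apply tf_iter_sub_closed; [apply aura_hull_closed | apply sub_aura_hull].
  - apply aura_hull_min; [exact hclosed | apply sub_tf_iter].
Qed.

End Transfinite.

(* [Some n] is the ordinal n and [None] is omega. *)
Definition succ_omega_lt (x y : option nat) : Prop :=
  match x, y with
  | Some n, Some m => n < m
  | Some _, None => True
  | None, _ => False
  end.

Lemma succ_omega_lt_wf : well_founded succ_omega_lt.
Proof.
  assert (hfin : forall n, Acc succ_omega_lt (Some n)).
  { intro n. induction n as [n IH] using (well_founded_ind lt_wf).
    constructor. intros [k |] hk; [exact (IH k hk) | contradiction]. }
  intros [n |]; [apply hfin |].
  constructor. intros [k |] hk; [apply hfin | contradiction].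
Qed.

Lemma succ_omega_lt_trans x y z :
  succ_omega_lt x y -> succ_omega_lt y z -> succ_omega_lt x z.
Proof. destruct x, y, z; simpl; intros; auto; lia. Qed.

Lemma succ_omega_lt_total x y : succ_omega_lt x y \/ x = y \/ succ_omega_lt y x.
Proof.
  destruct x as [n |], y as [m |]; simpl; auto.
  destruct (Nat.lt_trichotomy n m) as [h | [-> | h]]; auto.
Qed.

Definition succ_omega : wellorder :=
  WellOrder succ_omega_lt_wf succ_omega_lt_trans succ_omega_lt_total.

Lemma ipred_succ_omega n : @ipred succ_omega (Some (S n)) (Some n).
Proof.
  split; [simpl; lia |].
  intros [k |] hk; simpl in *; [| contradiction].
  destruct (Nat.eq_dec k n) as [-> | h]; [left; reflexivity | right; lia].
Qed.

Lemma nat_pigeonhole m (h : nat -> nat) :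
  (forall i, i <= m -> h i < m) ->
  ~ (forall i j, i <= m -> j <= m -> h i = h j -> i = j).
Proof.
  intros hrange hinj.
  assert (hlen : length (map h (seq 0 (S m))) <= length (seq 0 m)).
  { apply NoDup_incl_length.
    - apply NoDup_map_NoDup_ForallPairs; [| apply seq_NoDup].
      intros i j hi hj. apply in_seq in hi, hj. apply hinj; lia.
    - intros y hy. apply in_map_iff in hy as [i [<- hi]].
      apply in_seq in hi. apply in_seq. specialize (hrange i). lia. }
  rewrite length_map, !length_seq in hlen. lia.
Qed.

Definition rank_below m (d : {d : succ_omega | wo_lt succ_omega d (Some m)}) : nat :=
  match proj1_sig d with Some k => k | None => 0 end.

Lemma rank_below_lt m d : rank_below m d < m.
Proof. destruct d as [[k |] hd]; [exact hd | contradiction]. Qed.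

Lemma rank_below_inj m u v : rank_below m u = rank_below m v -> u = v.
Proof.
  destruct u as [[k |] hu], v as [[l |] hv]; unfold rank_below; simpl in *;
    try contradiction.
  intros <-. f_equal. apply proof_irrelevance.
Qed.

Lemma card_lt_of_injection {X : Type} m (f : nat -> X) :
  (forall i j, i <= m -> j <= m -> f i = f j -> i = j) ->
  card_lt {d : succ_omega | wo_lt succ_omega d (Some m)} X.
Proof.
  intro hf. split.
  - exists (fun d => f (rank_below m d)). intros u v huv. apply rank_below_inj.
    pose proof (rank_below_lt m u). pose proof (rank_below_lt m v).
    apply hf; [lia | lia | exact huv].
  - intros [g hg]. apply (nat_pigeonhole m (fun i => rank_below m (g (f i)))).
    + intros i _. apply rank_below_lt.
    + intros i j hi hj hij. apply hf; [exact hi | exact hj |].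
      apply hg, rank_below_inj, hij.
Qed.

Section FiniteIterates.
Context {X E : Type}.
Variable a : X -> softset X E.
Variable G : softset X E.

Notation iter n := (Nat.iter n (aura_cl a) G).

Lemma tf_iter_succ_omega_fin n : tf_iter a G succ_omega (Some n) = iter n.
Proof.
  induction n as [| n IH].
  - destruct (tf_iterP (W := succ_omega) a G (Some 0)) as [_ | [k |] [hb _] | _ [[k |] hb]];
      simpl in *; solve [reflexivity | lia | contradiction].
  - rewrite (tf_iter_succ a G (ipred_succ_omega n)), IH. reflexivity.
Qed.

Lemma aura_closed_tf_iter_omega : aura_closed a (tf_iter a G succ_omega None).
Proof.
  destruct (tf_iterP (W := succ_omega) a G None) as [hz | [k |] [hlt hb] | _ _].
  - exfalso. exact (hz (Some 0) I).
  - exfalso. destruct (hb (Some (S k)) I) as [h | h]; [injection h | simpl in h]; lia.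
  - destruct hlt.
  - intros e x [y [hy [[n |] [hn hyn]]]]; [| contradiction].
    exists (Some (S n)), I. rewrite (tf_iter_succ a G (ipred_succ_omega n)).
    exists y. split; assumption.
Qed.

Lemma iter_slice_stable e k :
  (forall x, iter (S k) e x -> iter k e x) ->
  forall j, k <= j -> forall x, iter j e x -> iter k e x.
Proof.
  intros hk j hj. induction hj as [| j hj IH]; intros x hx; [exact hx |].
  apply hk. destruct hx as [y [hy hjy]]. exists y. split; [exact hy | exact (IH y hjy)].
Qed.

Hypothesis aura_refl : forall x e, a x e x.

Lemma iter_mono k j : k <= j -> soft_sub (iter k) (iter j).
Proof.
  induction 1 as [| j _ IH]; intros e x hx; [exact hx |].
  apply (sub_aura_cl a aura_refl). exact (IH e x hx).
Qed.

Lemma new_point_at_each_step e m x1 :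
  iter (S m) e x1 -> ~ iter m e x1 ->
  forall k, k <= m -> exists x, iter (S k) e x /\ ~ iter k e x.
Proof.
  intros hin hout k hk. apply NNPP. intro hno.
  apply hout, (iter_mono _ _ hk).
  apply (iter_slice_stable e k) with (S m); [| lia | exact hin].
  intros x hx. apply NNPP. intro hx'. apply hno. exists x. split; assumption.
Qed.

Lemma injection_of_open_stage m :
  ~ aura_closed a (iter m) ->
  exists f : nat -> X, forall i j, i <= m -> j <= m -> f i = f j -> i = j.
Proof.
  intro hopen.
  assert (exists e x, iter (S m) e x /\ ~ iter m e x) as [e [x1 [hin hout]]].
  { apply NNPP. intro hno. apply hopen. intros e x hx.
    apply NNPP. intro hx'. apply hno. exists e, x. split; assumption. }
  pose (fresh k x := iter (S k) e x /\ ~ iter k e x).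
  exists (fun k => epsilon (inhabits x1) (fresh k)).
  intros i j hi hj hij.
  destruct (epsilon_spec (inhabits x1) (fresh i)
              (new_point_at_each_step e m x1 hin hout i hi)) as [hi1 hi2].
  destruct (epsilon_spec (inhabits x1) (fresh j)
              (new_point_at_each_step e m x1 hin hout j hj)) as [hj1 hj2].
  rewrite <- hij in hj1, hj2.
  destruct (Nat.lt_trichotomy i j) as [h | [h | h]]; [exfalso | exact h | exfalso].
  - exact (hj2 (iter_mono (S i) j h e _ hi1)).
  - exact (hi2 (iter_mono (S j) i h e _ hj1)).
Qed.

Lemma stabilization_exists : exists (W : wellorder) (gamma : W), stabilizes_at a G W gamma.
Proof.
  destruct (wo_least (fun alpha => aura_closed a (tf_iter a G succ_omega alpha)))
    as [gamma [hclosed hleast]].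
  { exists None. apply aura_closed_tf_iter_omega. }
  exists succ_omega, gamma. split; [| split].
  - intros [m |] hlt; [| simpl in hlt; contradiction].
    destruct (injection_of_open_stage m) as [f hf].
    + rewrite <- tf_iter_succ_omega_fin. exact (hleast _ hlt).
    + exact (card_lt_of_injection m f hf).
  - apply (aura_closed_eq a aura_refl), hclosed.
  - intros alpha hlt. exact (tf_iter_stable a G aura_refl hclosed hlt).
Qed.

Lemma clinf_aura_hull : clinf a G = aura_hull a G.
Proof.
  unfold clinf. destruct (excluded_middle_informative _) as [h | h].
  - destruct (constructive_indefinite_description _ h) as [W hW].
    destruct (constructive_indefinite_description _ hW) as [gamma hgamma].
    exact (stabilizes_at_aura_hull a G aura_refl hgamma).
  - exfalso. exact (h stabilization_exists).
Qed.

End FiniteIterates.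

Theorem theorem3p16 (X E : Type) (tau : softset X E -> Prop) (a : X -> softset X E)
  (hX : inhabited X) (hE : inhabited E)
  (htau : soft_topology tau) (ha : soft_scope tau a) :
  (forall G : softset X E, exists (W : wellorder) (gamma : W), stabilizes_at a G W gamma) /\
  clinf a (@soft_empty X E) = @soft_empty X E /\
  (forall G : softset X E, soft_sub G (clinf a G)) /\
  (forall G H : softset X E,
      clinf a (soft_union G H) = soft_union (clinf a G) (clinf a H)) /\
  (forall G : softset X E, clinf a (clinf a G) = clinf a G).
Proof.
  assert (aura_refl : forall x e, a x e x) by (intros x e; apply (proj2 (ha x))).
  split; [| split; [| split; [| split]]].
  - intro G. exact (stabilization_exists a G aura_refl).
  - rewrite (clinf_aura_hull a _ aura_refl).
    apply aura_hull_id, aura_closed_empty.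
  - intro G. rewrite (clinf_aura_hull a G aura_refl). apply sub_aura_hull.
  - intros G H. rewrite !(clinf_aura_hull a _ aura_refl). apply aura_hull_union.
  - intro G. rewrite !(clinf_aura_hull a _ aura_refl).
    apply aura_hull_id, aura_hull_closed.
Qed.
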